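(* Consider a single agent with $m$ actions and unknown utility vector $\mathbf{u}\in[0,1]^m$, interacting with a principal over $T$ rounds in the no-regret model (with a single signal), and let $\mathcal{P}=\{\mathbf{p}\in[0,2]^m:\langle\mathbf{1},\mathbf{p}\rangle=m\}$. Consider the principal algorithm: set $\mathbf{p}^1=\mathbf{1}$; for $t=1,\dots,T$, pay according to $\mathbf{p}^t$, observe the agent's action $a^t$, and set $\mathbf{p}^{t+1}=\Pi_{\mathcal{P}}[\mathbf{p}^t-\eta\mathbf{e}_{a^t}]$ with $\eta=\sqrt{m/T}$; finally output $-\frac1T\sum_{t=1}^T\mathbf{p}^t$. This algorithm $\varepsilon$-learns any single-agent game using $\mathcal{O}(m^3+C^2m^2)/\varepsilon^2$ rounds.
   Context: In each round $t$ the principal chooses a payment vector $\mathbf{p}^t\in\mathbb{R}_+^m$, the agent's utility that round is $\mathbf{u}+\mathbf{p}^t$, the agent plays an action $a^t\in[m]$ and the principal observes it. No-regret model: for every $t\le T$, $\max_{a}\sum_{\tau\le t}\big[(\mathbf{u}+\mathbf{p}^\tau)[a]-(\mathbf{u}+\mathbf{p}^\tau)[a^\tau]\big]\le C\sqrt{T}$, for a constant $C$ (at most polynomial in $m$). $\Pi_{\mathcal{P}}$ is Euclidean projection onto $\mathcal{P}$, $\mathbf{e}_a$ is the $a$-th unit vector. The principal $\varepsilon$-learns the game if its output $\tilde{\mathbf{u}}$ satisfies $|\mathbf{u}[a]+W-\tilde{\mathbf{u}}[a]|\le\varepsilon$ for all $a$ for some constant $W\in\mathbb{R}$. *)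

From HB Require Import structures.
From mathcomp Require Import all_boot all_order all_algebra.
From mathcomp Require Import reals.
Set Implicit Arguments. Unset Strict Implicit. Unset Printing Implicit Defensive.
Import Order.TTheory GRing.Theory Num.Theory.
Local Open Scope ring_scope.

Section Defs.
Variable R : realType.

Definition inP (m : nat) (p : 'I_m -> R) : Prop :=
  (forall i, 0 <= p i <= 2) /\ \sum_(i < m) p i = m%:R.

Definition sqdist (m : nat) (x y : 'I_m -> R) : R := \sum_(i < m) (x i - y i) ^+ 2.

Definition is_proj (m : nat) (S : ('I_m -> R) -> Prop) (x y : 'I_m -> R) : Prop :=
  S y /\ forall z, S z -> sqdist x y <= sqdist x z.

Definition unitv (m : nat) (a : 'I_m) : 'I_m -> R := fun i => (i == a)%:R.

Definition alg_payments (m T : nat) (a : nat -> 'I_m) (p : nat -> 'I_m -> R) : Prop :=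
  p 1%N = (fun _ => 1) /\
  forall t, (1 <= t <= T)%N ->
    is_proj (@inP m)
      (fun i => p t i - Num.sqrt (m%:R / T%:R) * unitv (a t) i) (p t.+1).

Definition no_regret (m T : nat) (u : 'I_m -> R) (C : R)
    (a : nat -> 'I_m) (p : nat -> 'I_m -> R) : Prop :=
  forall t, (t <= T)%N -> forall b : 'I_m,
    \sum_(1 <= tau < t.+1) ((u b + p tau b) - (u (a tau) + p tau (a tau)))
      <= C * Num.sqrt T%:R.

Definition alg_output (m T : nat) (p : nat -> 'I_m -> R) : 'I_m -> R :=
  fun i => - (T%:R^-1 * \sum_(1 <= t < T.+1) p t i).

Definition eps_learns (m : nat) (u ut : 'I_m -> R) (eps : R) : Prop :=
  exists W : R, forall b : 'I_m, `|u b + W - ut b| <= eps.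

End Defs.

(* The payments are projected online gradient descent on the linear losses
   p |-> p[a^t] over the convex set P, so against any fixed q in P the
   principal's regret is at most sqrt(mT): projecting onto a convex set never
   increases the distance to a point of the set.  Take q = c - u with
   c = 1 + mean(u); it lies in P, and it makes the agent indifferent between
   all actions.  Adding the agent's no-regret inequality to the principal's
   bound gives, for every action b, sum_t (u[b] + p^t[b] - c) <= C sqrt T +
   sqrt(mT).  Since every p^t sums to m, these m quantities sum to zero, so
   each has absolute value at most m (C sqrt T + sqrt(mT)), which is at most
   eps T once T >= 2 (m^3 + C^2 m^2) / eps^2; divide by T and take W = -c. *)

From HB Require Import structures.
From mathcomp Require Import all_boot all_order all_algebra.
From mathcomp Require Import reals ring lra.
Import Order.TTheory GRing.Theory Num.Theory.
Set Implicit Arguments. Unset Strict Implicit. Unset Printing Implicit Defensive.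
Local Open Scope ring_scope.

Section Arithmetic.
Variable R : rcfType.

Lemma linear_coef_ge0 (c d : R) :
  0 <= d -> (forall l, 0 < l <= 1 -> 0 <= 2 * l * c + l ^+ 2 * d) -> 0 <= c.
Proof.
move=> d0 quad_ge0; rewrite leNgt; apply/negP => c_lt0.
have dc_gt0 : 0 < d - c by lra.
pose l := - c / (d - c).
have l_gt0 : 0 < l by rewrite divr_gt0 // oppr_gt0.
have l_le1 : l <= 1 by rewrite ler_pdivrMr // mul1r; lra.
have ld_le : l * d <= - c by rewrite mulrAC ler_pdivrMr //; nra.
have := quad_ge0 l; rewrite l_gt0 l_le1 => /(_ isT).
have -> : 2 * l * c + l ^+ 2 * d = l * (2 * c + l * d) by ring.
by rewrite pmulr_rge0 //; lra.
Qed.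

Lemma le_sqrtM_of_sqrt_div_mul_le (m T S : R) :
  0 < m -> 0 < T -> Num.sqrt (m / T) * S <= m -> S <= Num.sqrt m * Num.sqrt T.
Proof.
move=> m_gt0 T_gt0; have eta_gt0 : 0 < Num.sqrt (m / T) by rewrite sqrtr_gt0 divr_gt0.
have eta_sqrt : Num.sqrt (m / T) * (Num.sqrt m * Num.sqrt T) = m.
  rewrite mulrCA -sqrtrM ?divr_ge0 ?ltW // divfK ?gt_eqF //.
  by rewrite -sqrtrM ?sqrtr_sqr ?ger0_norm ?ltW.
by rewrite -[in X in _ <= X -> _]eta_sqrt ler_pM2l.
Qed.

Lemma sample_size_bound (m T C eps : R) :
  0 <= m -> 0 <= T -> 0 <= C -> 0 < eps ->
  2 * (m ^+ 3 + C ^+ 2 * m ^+ 2) / eps ^+ 2 <= T ->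
  m * (C + Num.sqrt m) * Num.sqrt T <= eps * T.
Proof.
move=> m0 T0 C0 eps_gt0; rewrite ler_pdivrMr ?exprn_gt0 // => hT.
have sqrtT2 : Num.sqrt T ^+ 2 = T by rewrite sqr_sqrtr.
have sqrtm2 : Num.sqrt m ^+ 2 = m by rewrite sqr_sqrtr.
suff : m * (C + Num.sqrt m) <= eps * Num.sqrt T.
  move/(ler_wpM2r (sqrtr_ge0 T))/le_trans; apply.
  by rewrite -mulrA -expr2 sqrtT2.
rewrite -ler_sqr ?nnegrE ?mulr_ge0 ?addr_ge0 ?sqrtr_ge0 ?(ltW eps_gt0) //.
have CmC : (C + Num.sqrt m) ^+ 2 <= 2 * (C ^+ 2 + m).
  by have := sqr_ge0 (C - Num.sqrt m); nra.
rewrite !exprMn sqrtT2; apply: le_trans (ler_wpM2l (sqr_ge0 m) CmC) _.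
by move: hT; rewrite mulrC; lra.
Qed.

Lemma norm_le_of_sum0 (n : nat) (f : 'I_n -> R) (d : R) (b : 'I_n) :
  (forall i, f i <= d) -> \sum_i f i = 0 -> `|f b| <= n%:R * d.
Proof.
move=> f_le sum0; have n_gt0 : (0 < n)%N := leq_ltn_trans (leq0n b) (ltn_ord b).
have slack_ge0 i : 0 <= d - f i by rewrite subr_ge0.
have sum_slack : \sum_i (d - f i) = n%:R * d.
  by rewrite sumrB sum0 subr0 sumr_const card_ord mulr_natl.
have slack_le i : d - f i <= n%:R * d.
  by rewrite -sum_slack (bigD1 i) //= lerDl sumr_ge0.
have d0 : 0 <= d.
  have : 0 <= n%:R * d by rewrite -sum_slack sumr_ge0.
  by rewrite pmulr_rge0 // ltr0n.
have d_le : d <= n%:R * d by rewrite ler_peMl // ler1n.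
rewrite ler_norml; apply/andP; split; [have := slack_le b | have := f_le b]; lra.
Qed.

End Arithmetic.

Section Projection.
Variables (R : realType) (m : nat).
Implicit Types (x y q : 'I_m -> R) (S : ('I_m -> R) -> Prop).

Definition convex_set S :=
  forall x y l, S x -> S y -> 0 <= l <= 1 -> S (fun i => x i + l * (y i - x i)).

Lemma sqdist_ge0 x y : 0 <= sqdist x y.
Proof. by apply: sumr_ge0 => i _; apply: sqr_ge0. Qed.

Lemma sumr_sqrDZ (f g : 'I_m -> R) l :
  \sum_i (f i + l * g i) ^+ 2 =
  \sum_i f i ^+ 2 + 2 * l * \sum_i f i * g i + l ^+ 2 * \sum_i g i ^+ 2.
Proof. rewrite !mulr_sumr -!big_split; by apply: eq_bigr => i _ /=; ring. Qed.

Lemma proj_variational S x y q :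
  convex_set S -> is_proj S x y -> S q -> 0 <= \sum_i (x i - y i) * (y i - q i).
Proof.
move=> S_convex [Sy y_min] Sq; apply: linear_coef_ge0 (sqdist_ge0 y q) _.
move=> l /andP[l_gt0 l_le1].
have := y_min _ (S_convex _ _ l Sy Sq _); rewrite ltW // l_le1 => /(_ isT).
rewrite /sqdist.
under [X in _ <= X]eq_bigr => i _.
  rewrite (_ : x i - _ = (x i - y i) + l * (y i - q i)); last by ring.
  over.
by rewrite sumr_sqrDZ; lra.
Qed.

Lemma proj_sqdist_le S x y q :
  convex_set S -> is_proj S x y -> S q -> sqdist y q <= sqdist x q.
Proof.
move=> S_convex y_proj Sq; have := proj_variational S_convex y_proj Sq.
rewrite /sqdist.
under [X in _ -> _ <= X]eq_bigr => i _.
  rewrite (_ : x i - q i = (x i - y i) + 1 * (y i - q i)); last by ring.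
  over.
by rewrite sumr_sqrDZ; have := sqdist_ge0 x y; rewrite /sqdist; lra.
Qed.

End Projection.

Section GradientDescent.
Variables (R : realType) (m : nat).
Implicit Types (x q : 'I_m -> R) (a : 'I_m).

Lemma inP_convex : convex_set (@inP R m).
Proof.
move=> x y l [x02 sum_x] [y02 sum_y] /andP[l0 l1]; split.
  move=> i; have /andP[? ?] := x02 i; have /andP[? ?] := y02 i.
  by apply/andP; split; nra.
by rewrite big_split /= -mulr_sumr sumrB sum_x sum_y subrr mulr0 addr0.
Qed.

Lemma inP_const1 : inP (fun _ : 'I_m => 1 : R).
Proof. by split=> [i|]; rewrite ?ler01 ?ler1n // sumr_const card_ord. Qed.

Lemma sumr_mul_unitv (f : 'I_m -> R) a : \sum_i f i * unitv R a i = f a.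
Proof.
rewrite (bigD1 a) //= big1 => [|i /negbTE ne_ia]; rewrite /unitv ?eqxx ?ne_ia.
  by rewrite mulr1 addr0.
by rewrite mulr0.
Qed.

Lemma proj_gradient_step_le S x x' q a (eta : R) :
  convex_set S -> is_proj S (fun i => x i - eta * unitv R a i) x' -> S q ->
  2 * eta * (x a - q a) <= sqdist x q - sqdist x' q + eta ^+ 2.
Proof.
move=> S_convex x'_proj Sq; have := proj_sqdist_le S_convex x'_proj Sq.
rewrite {2}/sqdist.
under eq_bigr => i _.
  rewrite (_ : _ - q i = (x i - q i) + - eta * unitv R a i); last by ring.
  over.
have unitv_sqr i : unitv R a i ^+ 2 = 1 * unitv R a i.
  by rewrite /unitv; case: (i == a); rewrite ?expr0n ?expr1n ?mul1r.
rewrite sumr_sqrDZ sumr_mul_unitv (eq_bigr _ (fun i _ => unitv_sqr i)).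
rewrite sumr_mul_unitv -/(sqdist x q); lra.
Qed.

Lemma alg_payments_inP T (a : nat -> 'I_m) (p : nat -> 'I_m -> R) t :
  alg_payments T a p -> (1 <= t <= T.+1)%N -> inP (p t).
Proof.
case=> [p1 p_step]; case: t => [|t] //= t_le.
case: t t_le => [_|t t_le]; first by rewrite p1; exact: inP_const1.
by have [] := p_step t.+1 t_le.
Qed.

Lemma alg_payments_regret T (a : nat -> 'I_m) (p : nat -> 'I_m -> R) q :
  alg_payments T a p -> inP q ->
  2 * Num.sqrt (m%:R / T%:R) * \sum_(1 <= t < T.+1) (p t (a t) - q (a t))
    <= sqdist (p 1%N) q + m%:R.
Proof.
move=> [p1 p_step] Pq; set eta := Num.sqrt _.
have step t : (1 <= t < T.+1)%N ->
    2 * eta * (p t (a t) - q (a t)) <= sqdist (p t) q - sqdist (p t.+1) q + eta ^+ 2.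
  by move=> t_range; apply: proj_gradient_step_le inP_convex (p_step t t_range) Pq.
have telescope : \sum_(1 <= t < T.+1) (sqdist (p t) q - sqdist (p t.+1) q) =
                 sqdist (p 1%N) q - sqdist (p T.+1) q.
  have := telescope_sumr (fun t => - sqdist (p t) q) (ltn0Sn T).
  under eq_bigr do rewrite opprK addrC.
  by rewrite opprK addrC.
have T_eta2 : eta ^+ 2 *+ T <= m%:R.
  rewrite sqr_sqrtr ?divr_ge0 // -mulr_natr.
  have [->|T_gt0] := posnP T; first by rewrite mulr0.
  by rewrite divfK ?pnatr_eq0 -?lt0n.
rewrite mulr_sumr; apply: le_trans (ler_sum_nat step) _.
rewrite big_split /= telescope sumr_const_nat subSS subn0.
by have := sqdist_ge0 (p T.+1) q; lra.
Qed.

End GradientDescent.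

Section Comparator.
Variables (R : realType) (m : nat) (u : 'I_m -> R).
Hypotheses (m_gt0 : (0 < m)%N) (u01 : forall i, 0 <= u i <= 1).

Definition avg : R := (\sum_i u i) / m%:R.

Definition comparator : 'I_m -> R := fun i => 1 + avg - u i.

Lemma mulr_avg : m%:R * avg = \sum_i u i.
Proof. by rewrite mulrC divfK // pnatr_eq0 -lt0n. Qed.

Lemma avg_ge0 : 0 <= avg.
Proof. by rewrite divr_ge0 // sumr_ge0 // => i _; case/andP: (u01 i). Qed.

Lemma avg_le1 : avg <= 1.
Proof.
rewrite ler_pdivrMr ?ltr0n // mul1r -[in leRHS](card_ord m) -sumr_const.
by apply: ler_sum => i _; case/andP: (u01 i).
Qed.

Lemma comparator_inP : inP comparator.
Proof.
split=> [i|].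
  have := avg_ge0; have := avg_le1; case/andP: (u01 i) => *.
  by apply/andP; split; rewrite /comparator; lra.
by rewrite /comparator sumrB sumr_const card_ord -mulr_natl -mulr_avg; ring.
Qed.

Lemma sqdist_const1_comparator : sqdist (fun _ => 1) comparator <= m%:R.
Proof.
rewrite /sqdist -[in leRHS](card_ord m) -sumr_const; apply: ler_sum => i _.
have := avg_ge0; have := avg_le1; case/andP: (u01 i) => u0 u1 avg1 avg0.
have : 0 <= (1 - u i + avg) * (1 + u i - avg) by apply: mulr_ge0; lra.
by rewrite /comparator; nra.
Qed.

Lemma sum_gap_eq0 (p : 'I_m -> R) : inP p -> \sum_b (u b + p b - (1 + avg)) = 0.
Proof.
case=> _ sum_p; rewrite sumrB big_split /= sum_p sumr_const card_ord.
rewrite -[_ *+ m]mulr_natl -mulr_avg; ring.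
Qed.

End Comparator.

Section Learning.
Variables (R : realType) (m T : nat) (u : 'I_m -> R) (a : nat -> 'I_m).
Variable p : nat -> 'I_m -> R.

Definition cum_gap (c : R) (b : 'I_m) : R := \sum_(1 <= t < T.+1) (u b + p t b - c).

Lemma cum_gap_le C c b : no_regret T u C a p ->
  cum_gap c b <= C * Num.sqrt T%:R + \sum_(1 <= t < T.+1) (p t (a t) - (c - u (a t))).
Proof.
move=> /(_ T (leqnn T) b) regret_b; apply: le_trans (lerD regret_b (lexx _)).
by rewrite -big_split; apply: ler_sum => t _ /=; lra.
Qed.

Lemma sum_cum_gap_eq0 : (0 < m)%N -> alg_payments T a p ->
  \sum_b cum_gap (1 + avg u) b = 0.
Proof.
move=> m_gt0 alg; rewrite exchange_big big_nat big1 // => t /andP[t_ge1 t_le].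
by apply/sum_gap_eq0/(alg_payments_inP alg); rewrite // t_ge1 ltnW.
Qed.

Lemma alg_output_error c b : (0 < T)%N ->
  u b - c - alg_output T p b = T%:R^-1 * cum_gap c b.
Proof.
move=> T_gt0; rewrite /alg_output /cum_gap sumrB big_split /= !sumr_const_nat subSS subn0.
by field; rewrite pnatr_eq0 -lt0n.
Qed.

End Learning.

Theorem theorem5p2 (R : realType) :
  exists K : R, 0 < K /\
  forall (m : nat) (u : 'I_m -> R) (C eps : R) (T : nat)
         (a : nat -> 'I_m) (p : nat -> 'I_m -> R),
    (0 < m)%N ->
    (forall i, 0 <= u i <= 1) ->
    0 <= C ->
    0 < eps ->
    K * (m%:R ^+ 3 + C ^+ 2 * m%:R ^+ 2) / eps ^+ 2 <= T%:R ->
    @alg_payments R m T a p ->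
    @no_regret R m T u C a p ->
    eps_learns u (@alg_output R m T p) eps.
Proof.
exists 2; split=> // m u C eps T a p m_gt0 u01 C_ge0 eps_gt0 T_large alg regret.
have T_gt0 : (0 < T)%N.
  rewrite -(ltr0n R); apply: lt_le_trans T_large.
  by rewrite divr_gt0 ?exprn_gt0 ?mulr_gt0 ?ltr_wpDr ?mulr_ge0 ?sqr_ge0 ?exprn_gt0 ?ltr0n.
set S := \sum_(1 <= t < T.+1) (p t (a t) - comparator u (a t)).
have S_le : S <= Num.sqrt m%:R * Num.sqrt T%:R.
  apply: le_sqrtM_of_sqrt_div_mul_le; rewrite ?ltr0n //.
  have := alg_payments_regret alg (comparator_inP m_gt0 u01).
  have := sqdist_const1_comparator m_gt0 u01; case: alg => -> _; rewrite -/S; lra.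
have total_le : m%:R * (C * Num.sqrt T%:R + S) <= eps * T%:R.
  apply: le_trans (sample_size_bound (ler0n _ m) (ler0n _ T) C_ge0 eps_gt0 T_large).
  by rewrite -mulrA ler_wpM2l ?ler0n // mulrDl lerD2l.
exists (- (1 + avg u)) => b; rewrite alg_output_error // normrM.
rewrite ger0_norm ?invr_ge0 ?ler0n // ler_pdivrMl ?ltr0n //.
rewrite mulrC; apply: le_trans total_le.
apply: norm_le_of_sum0 (sum_cum_gap_eq0 u m_gt0 alg) => i.
exact: cum_gap_le.
Qed.
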